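(* Let $Q$ be a dimer quiver with dimer algebra $A_Q$, and let $t:=\sum_{i\in Q_0}u_i\in A_Q$. Then $\mathbb{C}[t]\subseteq Z(A_Q)$, the centre of $A_Q$.
   Context: A quiver with faces is a finite quiver $Q=(Q_0,Q_1)$ with a finite set $Q_2$ of faces and a map $\partial$ sending each face to an oriented cycle. A dimer quiver is one with $Q_2=Q_2^+\sqcup Q_2^-$ such that: no loops; each arrow lies on the boundary of one or two faces, and if two, one in $Q_2^+$ and one in $Q_2^-$; at each vertex $i$ the incidence graph (vertices: arrows at $i$; edge between $\alpha,\beta$ if ''$\alpha$ into $i$, $\beta$ out of $i$'' is part of a face boundary) is non-empty and connected. An arrow is internal if it lies on two faces. Paths compose left to right. The dimer algebra $A_Q$ is the path algebra $\mathbb{C}Q$ modulo the ideal generated by $p_{F_1}-p_{F_2}$ for each internal arrow $\alpha$, where $F_1\in Q_2^+$, $F_2\in Q_2^-$ are the two faces containing $\alpha$ and $\alpha p_{F_j}$ is $\partial F_j$ read starting with $\alpha$. For each vertex $i$, the boundary cycles of all faces through $i$, read as cycles starting and ending at $i$, are equal in $A_Q$; $u_i$ denotes this element. *)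

(* The path algebra K Q is modelled by finite formal K-linear combinations of
   paths (seq (K * qpath)), compared through their coefficient functions; the
   dimer algebra A_Q = K Q / I is handled by the ideal-membership predicate
   [in_dimer_ideal], so that "z is central in A_Q" reads
   "forall x in KQ, z x - x z \in I". *)
From HB Require Import structures.
From mathcomp Require Import all_boot all_algebra.
From mathcomp Require Import Rstruct complex.
Set Implicit Arguments. Unset Strict Implicit. Unset Printing Implicit Defensive.
Import GRing.Theory.
Local Open Scope ring_scope.

Definition Cplx : fieldType := (Rdefinitions.R)[i].

Section Dimer.
Variables (Q0 Q1 Q2 : finType) (s t : Q1 -> Q0).

Definition oriented_cycle (c : seq Q1) : bool :=
  (c != [::]) && cycle (fun a b => t a == s b) c.

Definition cyc_adj (c : seq Q1) (a b : Q1) : bool :=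
  has (fun k => (nth a c k == a) && (nth a c ((k + 1) %% size c) == b))
      (iota 0 (size c)).

Variables (bnd : Q2 -> seq Q1) (pos : Q2 -> bool).
(* Q2^+ = faces F with pos F, Q2^- = faces F with ~~ pos F. *)

Definition face_occ (a : Q1) : nat := (\sum_(F : Q2) count_mem a (bnd F))%N.

Definition arrow_at (i : Q0) (a : Q1) : bool := (s a == i) || (t a == i).

Definition incid (i : Q0) (a b : Q1) : bool :=
  [&& t a == i, s b == i & [exists F : Q2, cyc_adj (bnd F) a b]].

Definition incid_sym (i : Q0) : rel Q1 := fun a b => incid i a b || incid i b a.

Definition is_dimer_quiver : Prop :=
  [/\ forall F, oriented_cycle (bnd F),
      forall a : Q1, s a != t a,
      forall a : Q1, face_occ a = 1%N \/
        (face_occ a = 2%N /\ exists F1 F2, [&& pos F1, ~~ pos F2,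
                                    a \in bnd F1 & a \in bnd F2]) &
      forall i : Q0, (exists a, arrow_at i a) /\
        forall a b, arrow_at i a -> arrow_at i b -> connect (incid_sym i) a b].

Variable K : fieldType.

(* a path: start vertex and list of arrows (composed left to right) *)
Definition qpath : Type := (Q0 * seq Q1)%type.

Definition valid_path (p : qpath) : bool :=
  match p.2 with
  | [::] => true
  | a :: l => (s a == p.1) && path (fun x y => t x == s y) a l
  end.

Definition pend (p : qpath) : Q0 := last p.1 (map t p.2).

Definition pcat (p q : qpath) : qpath := (p.1, p.2 ++ q.2).

Definition elt : Type := seq (K * qpath).

Definition valid_elt (x : elt) : bool := all (fun kp => valid_path kp.2) x.

Definition coef (x : elt) (p : qpath) : K :=
  \sum_(kp <- x | kp.2 == p) kp.1.

Definition eadd (x y : elt) : elt := x ++ y.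
Definition escale (c : K) (x : elt) : elt := [seq (c * kp.1, kp.2) | kp <- x].
Definition esub (x y : elt) : elt := eadd x (escale (-1) y).
Definition emul (x y : elt) : elt :=
  flatten [seq [seq (kp.1 * kq.1, pcat kp.2 kq.2) | kq <- y & pend kp.2 == kq.2.1]
          | kp <- x].
Definition eone : elt := [seq (1, (i, [::])) | i <- enum Q0].
Definition epath (p : qpath) : elt := [:: (1, p)].
Definition epoly (P : {poly K}) (z : elt) : elt :=
  foldr (fun c acc => eadd (escale c eone) (emul z acc)) [::] P.

(* alpha p_F is the boundary of F read starting with alpha *)
Definition p_face (a : Q1) (F : Q2) : qpath :=
  (t a, behead (rot (index a (bnd F)) (bnd F))).

(* generating relations p_F1 - p_F2, for an (internal) arrow a lying on
   F1 in Q2^+ and F2 in Q2^- *)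
Definition is_rel (r : Q1 * Q2 * Q2) : bool :=
  [&& pos r.1.2, ~~ pos r.2, r.1.1 \in bnd r.1.2 & r.1.1 \in bnd r.2].

Definition rel_elt (r : Q1 * Q2 * Q2) : elt :=
  esub (epath (p_face r.1.1 r.1.2)) (epath (p_face r.1.1 r.2)).

Definition in_dimer_ideal (x : elt) : Prop :=
  exists L : seq (K * qpath * (Q1 * Q2 * Q2) * qpath),
    all (fun w => [&& valid_path w.1.1.2, is_rel w.1.2 & valid_path w.2]) L /\
    forall p, coef x p =
      coef (flatten [seq escale w.1.1.1
                        (emul (emul (epath w.1.1.2) (rel_elt w.1.2)) (epath w.2))
                    | w <- L]) p.

(* c is the boundary cycle of a face through i, read starting and ending at i *)
Definition face_cycle_at (i : Q0) (c : seq Q1) : Prop :=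
  exists F : Q2, exists2 k, (k < size (bnd F))%N &
    c = rot k (bnd F) /\ (if c is a :: _ then s a == i else false).

End Dimer.

(* In A_Q all faces through an arrow [a] give the same return path [p_F]
   from the target of [a] back to its source.  Hence a face cycle read at an
   endpoint [i] of [a] does not depend on the face through [a], and two arrows
   adjacent in the incidence graph at [i] lie on a common face read the same
   way from [i]; by connectedness every face cycle at [i] equals [u_i].
   Reading a face through an arrow [a : i -> j] once from [i] and once from [j]
   gives [u_i a = a p_F a = a u_j], so [t] commutes with every arrow, hence
   with every path and every element.  Central elements form a subalgebra
   containing [1], so [C[t]] is central. *)

From mathcomp Require Import all_boot all_algebra.
From mathcomp Require Import ring zify.
Set Implicit Arguments. Unset Strict Implicit. Unset Printing Implicit Defensive.
Import GRing.Theory.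
Local Open Scope ring_scope.

Lemma big_pred1_uniq (R : nmodType) (T : eqType) (S : seq T) j (F : T -> R) :
  uniq S -> j \in S -> \sum_(i <- S | i == j) F i = F j.
Proof. by move=> uS jS; rewrite -big_filter filter_pred1_uniq // big_seq1. Qed.

Section PathAlgebra.
Variables (Q0 Q1 : finType) (t : Q1 -> Q0) (K : fieldType).
Local Notation elt := (elt Q0 Q1 K).
Local Notation qpath := (qpath Q0 Q1).
Local Notation emul := (emul t).
Local Notation epath := (epath K).
Implicit Types (x y z : elt) (p q r : qpath) (g : qpath -> K).

(* Elements are only ever compared through [coef]; every coefficient identity
   is proved through this linear extension of [g] ([coef x p] is the case of
   the indicator of [p]). *)
Definition elt_sum x g : K := \sum_(kp <- x) kp.1 * g kp.2.

Lemma elt_sum_nil g : elt_sum [::] g = 0.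
Proof. exact: big_nil. Qed.

Lemma elt_sum_cons kp x g : elt_sum (kp :: x) g = kp.1 * g kp.2 + elt_sum x g.
Proof. exact: big_cons. Qed.

Lemma elt_sum_cat x y g : elt_sum (x ++ y) g = elt_sum x g + elt_sum y g.
Proof. exact: big_cat. Qed.

Lemma elt_sum_escale c x g : elt_sum (escale c x) g = c * elt_sum x g.
Proof.
by rewrite /elt_sum big_map big_distrr; apply: eq_bigr => kp _ /=; rewrite mulrA.
Qed.

Lemma eq_elt_sum x g g' : g =1 g' -> elt_sum x g = elt_sum x g'.
Proof. by move=> eq_g; apply: eq_bigr => kp _; rewrite eq_g. Qed.

Lemma elt_sum0 x : elt_sum x (fun=> 0) = 0.
Proof. by rewrite /elt_sum big1 // => kp _; rewrite mulr0. Qed.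

Lemma elt_sumD x g g' : elt_sum x (fun r => g r + g' r) = elt_sum x g + elt_sum x g'.
Proof. by rewrite /elt_sum -big_split; apply: eq_bigr => kp _; rewrite mulrDr. Qed.

Lemma elt_sumZ x c g : elt_sum x (fun r => c * g r) = c * elt_sum x g.
Proof.
by rewrite /elt_sum big_distrr; apply: eq_bigr => kp _; rewrite mulrCA.
Qed.

Lemma elt_sum_big (I : Type) (S : seq I) x (G : I -> qpath -> K) :
  elt_sum x (fun r => \sum_(i <- S) G i r) = \sum_(i <- S) elt_sum x (G i).
Proof.
by rewrite /elt_sum; under eq_bigr do rewrite big_distrr; rewrite exchange_big.
Qed.

Lemma coef_elt_sum x p : coef x p = elt_sum x (fun r => (r == p)%:R).
Proof.
rewrite /coef /elt_sum big_mkcond; apply: eq_bigr => kp _.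
by case: eqP; rewrite ?mulr1 ?mulr0.
Qed.

Lemma elt_sum_coef x g (S : seq qpath) : uniq S -> {subset map snd x <= S} ->
  elt_sum x g = \sum_(r <- S) coef x r * g r.
Proof.
move=> uS xS; under [RHS]eq_bigr do rewrite /coef big_distrl big_mkcond.
rewrite exchange_big /elt_sum; apply: eq_big_seq => kp kpx /=.
rewrite -big_mkcond (eq_bigl (pred1 kp.2)) => [|r]; last by rewrite eq_sym.
by rewrite big_pred1_uniq // xS // map_f.
Qed.

Lemma eq_coef_elt_sum x y g : coef x =1 coef y -> elt_sum x g = elt_sum y g.
Proof.
move=> eq_xy; set S := undup (map snd (x ++ y)).
have sub_x : {subset map snd x <= S}.
  by move=> r rx; rewrite mem_undup map_cat mem_cat rx.
have sub_y : {subset map snd y <= S}.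
  by move=> r ry; rewrite mem_undup map_cat mem_cat ry orbT.
rewrite (@elt_sum_coef x g S) ?(@elt_sum_coef y g S) ?undup_uniq //.
by apply: eq_bigr => r _; rewrite eq_xy.
Qed.

Lemma coef_nil p : coef ([::] : elt) p = 0.
Proof. exact: big_nil. Qed.

Lemma coef_cat x y p : coef (x ++ y) p = coef x p + coef y p.
Proof. exact: big_cat. Qed.

Lemma coef_escale c x p : coef (escale c x) p = c * coef x p.
Proof. by rewrite !coef_elt_sum elt_sum_escale. Qed.

Lemma coef_esub x y p : coef (esub x y) p = coef x p - coef y p.
Proof. by rewrite coef_cat coef_escale mulN1r. Qed.

Lemma elt_sum_emul x y G : elt_sum (emul x y) G =
  elt_sum x (fun r1 => elt_sum y (fun r2 =>
    if pend t r1 == r2.1 then G (pcat r1 r2) else 0)).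
Proof.
elim: x => [|kp x IH]; first by rewrite !elt_sum_nil.
rewrite [emul _ _]/= elt_sum_cat IH elt_sum_cons; congr (_ + _).
rewrite /elt_sum big_map big_filter big_mkcond big_distrr /=.
by apply: eq_bigr => kq _; case: ifP; rewrite ?mulr0 ?mulrA.
Qed.

Lemma coef_emul x y p : coef (emul x y) p =
  elt_sum x (fun r1 => elt_sum y (fun r2 =>
    if pend t r1 == r2.1 then (pcat r1 r2 == p)%:R else 0)).
Proof. by rewrite coef_elt_sum elt_sum_emul. Qed.

Lemma eq_coef_emul x x' y y' : coef x =1 coef x' -> coef y =1 coef y' ->
  coef (emul x y) =1 coef (emul x' y').
Proof.
move=> eq_x eq_y p; rewrite !coef_emul (eq_coef_elt_sum _ eq_x).
by apply: eq_elt_sum => r; apply: eq_coef_elt_sum.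
Qed.

Lemma emul_catl x y z : emul (x ++ y) z = emul x z ++ emul y z.
Proof. by rewrite /emul map_cat flatten_cat. Qed.

Lemma emul_catr x y z : coef (emul x (y ++ z)) =1 coef (emul x y ++ emul x z).
Proof.
move=> p; rewrite coef_cat !coef_emul -elt_sumD.
by apply: eq_elt_sum => r; rewrite elt_sum_cat.
Qed.

Lemma emul_scalel c x y : coef (emul (escale c x) y) =1 coef (escale c (emul x y)).
Proof. by move=> p; rewrite coef_escale !coef_emul elt_sum_escale. Qed.

Lemma emul_scaler c x y : coef (emul x (escale c y)) =1 coef (escale c (emul x y)).
Proof.
move=> p; rewrite coef_escale !coef_emul -elt_sumZ.
by apply: eq_elt_sum => r; rewrite elt_sum_escale.
Qed.

Lemma emul_subl x y z : coef (emul (esub x y) z) =1 coef (esub (emul x z) (emul y z)).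
Proof. by move=> p; rewrite emul_catl !coef_cat emul_scalel. Qed.

Lemma emul_subr x y z : coef (emul x (esub y z)) =1 coef (esub (emul x y) (emul x z)).
Proof. by move=> p; rewrite emul_catr !coef_cat emul_scaler. Qed.

Lemma emul0r x : coef (emul x [::]) =1 coef [::].
Proof.
move=> p; rewrite coef_emul coef_nil -(elt_sum0 x).
by apply: eq_elt_sum => r; rewrite elt_sum_nil.
Qed.

Lemma pend_pcat p q : pend t p = q.1 -> pend t (pcat p q) = pend t q.
Proof. by rewrite /pend /pcat /= map_cat last_cat => ->. Qed.

Lemma pcatA p q r : pcat p (pcat q r) = pcat (pcat p q) r.
Proof. by rewrite /pcat /= catA. Qed.

Lemma emulA x y z : coef (emul (emul x y) z) =1 coef (emul x (emul y z)).
Proof.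
move=> p; rewrite !coef_emul elt_sum_emul; apply: eq_elt_sum => r1.
rewrite elt_sum_emul; apply: eq_elt_sum => r2 /=.
case: eqP => [r12|_]; last by under eq_elt_sum do rewrite if_same; rewrite elt_sum0.
by apply: eq_elt_sum => r3; rewrite pend_pcat // pcatA.
Qed.

Lemma emul_epath p q :
  emul (epath p) (epath q) = if pend t p == q.1 then epath (pcat p q) else [::].
Proof. by rewrite /emul /=; case: ifP => //= _; rewrite mul1r. Qed.

Lemma emul_eonel x : coef (emul (eone Q0 Q1 K) x) =1 coef x.
Proof.
move=> p; rewrite coef_emul [in RHS]coef_elt_sum {1}/elt_sum big_map.
under eq_bigr do rewrite mul1r; rewrite -elt_sum_big; apply: eq_elt_sum => -[i l] /=.
rewrite /pend /= -big_mkcond.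
rewrite (eq_bigl (pred1 i)) => [|j]; last by rewrite eq_sym.
by rewrite big_pred1_uniq ?enum_uniq ?mem_enum.
Qed.

Lemma emul_eoner x : coef (emul x (eone Q0 Q1 K)) =1 coef x.
Proof.
move=> p; rewrite coef_emul [in RHS]coef_elt_sum; apply: eq_elt_sum => -[i l] /=.
rewrite /elt_sum big_map; under eq_bigr do rewrite mul1r; rewrite -big_mkcond /=.
rewrite (eq_bigl (pred1 (pend t (i, l)))) ?big_pred1_uniq ?enum_uniq ?mem_enum //.
by rewrite /pcat cats0.
Qed.

Lemma elt_sum_epath p g : elt_sum (epath p) g = g p.
Proof. by rewrite elt_sum_cons elt_sum_nil mul1r addr0. Qed.

Lemma elt_sum_flatten_epath (I : Type) (S : seq I) (f : I -> qpath) g :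
  elt_sum (flatten [seq epath (f i) | i <- S]) g = \sum_(i <- S) g (f i).
Proof.
elim: S => [|i S IH]; first by rewrite elt_sum_nil big_nil.
by rewrite [flatten _]/= elt_sum_cons IH big_cons mul1r.
Qed.

End PathAlgebra.

Section DimerIdeal.
Variables (Q0 Q1 Q2 : finType) (s t : Q1 -> Q0) (bnd : Q2 -> seq Q1) (pos : Q2 -> bool).
Variable K : fieldType.
Local Notation elt := (elt Q0 Q1 K).
Local Notation qpath := (qpath Q0 Q1).
Local Notation emul := (emul t).
Local Notation epath := (epath K).
Local Notation in_ideal := (in_dimer_ideal s t bnd pos).
Local Notation valid := (valid_path s t).
Local Notation valid_elt := (@valid_elt Q0 Q1 s t K).
Implicit Types (x y z : elt) (p q r : qpath).

Lemma valid_pcat p q : valid p -> valid q -> pend t p = q.1 -> valid (pcat p q).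
Proof.
case: p q => [i [|a l]] [j m]; rewrite /valid_path /pend /=; first by move=> _ ? ->.
case/andP=> -> pal; rewrite cat_path pal /=.
case: m => [|b m] //= /andP[/eqP <- ->]; rewrite andbT /pend last_map => ->.
by [].
Qed.

Lemma valid_elt_cat x y : valid_elt x -> valid_elt y -> valid_elt (x ++ y).
Proof. by rewrite /valid_elt all_cat => -> ->. Qed.

Lemma valid_elt_escale c x : valid_elt x -> valid_elt (escale c x).
Proof. by rewrite /valid_elt all_map. Qed.

Lemma valid_elt_emul x y : valid_elt x -> valid_elt y -> valid_elt (emul x y).
Proof.
elim: x => [//|kp x IH] /= /andP[vkp vx] vy; apply: valid_elt_cat (IH vx vy).
apply/allP => w /mapP[kq]; rewrite mem_filter => /andP[/eqP kpq kqy] -> /=.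
by apply: valid_pcat => //; move/allP: vy => /(_ _ kqy).
Qed.

Lemma valid_elt_eone : valid_elt (eone Q0 Q1 K).
Proof. by rewrite /valid_elt all_map; apply/allP. Qed.

Definition ideal_comb (L : seq (K * qpath * (Q1 * Q2 * Q2) * qpath)) : elt :=
  flatten [seq escale w.1.1.1
                 (emul (emul (epath w.1.1.2) (rel_elt t bnd K w.1.2)) (epath w.2))
           | w <- L].

Lemma in_ideal_eq_coef x y : in_ideal x -> coef x =1 coef y -> in_ideal y.
Proof. by case=> L [vL eq_xL] eq_xy; exists L; split => // p; rewrite -eq_xy. Qed.

Lemma in_ideal0 x : coef x =1 coef [::] -> in_ideal x.
Proof. by move=> x0; exists [::]; split. Qed.

Lemma in_ideal_cat x y : in_ideal x -> in_ideal y -> in_ideal (x ++ y).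
Proof.
case=> [L1 [vL1 eq1]] [L2 [vL2 eq2]]; exists (L1 ++ L2).
by rewrite all_cat vL1 vL2; split=> // p; rewrite map_cat flatten_cat !coef_cat eq1 eq2.
Qed.

Lemma in_ideal_escale c x : in_ideal x -> in_ideal (escale c x).
Proof.
case=> L [vL eq_xL]; exists [seq ((c * w.1.1.1, w.1.1.2), w.1.2, w.2) | w <- L].
split=> [|p]; first by rewrite all_map.
rewrite coef_escale eq_xL; elim: L {vL eq_xL} => [|w L IH] /=.
  by rewrite !coef_nil mulr0.
by rewrite !coef_cat !coef_escale mulrDr IH mulrA.
Qed.

Lemma in_ideal_gen p w q : valid p -> is_rel bnd pos w -> valid q ->
  in_ideal (emul (emul (epath p) (rel_elt t bnd K w)) (epath q)).
Proof.
move=> vp rel_w vq; exists [:: (1, p, w, q)]; split=> [|r].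
  by rewrite /= vp rel_w vq.
by rewrite /= coef_cat coef_nil addr0 coef_escale mul1r.
Qed.

Lemma in_ideal_mull_path p x : valid p -> in_ideal x -> in_ideal (emul (epath p) x).
Proof.
move=> vp [L [vL eq_xL]].
apply: (@in_ideal_eq_coef (emul (epath p) (ideal_comb L))); last first.
  by apply: eq_coef_emul => // r; rewrite eq_xL.
elim: L {eq_xL} vL => [_|w L IH /andP[/and3P[va rel_w vb] vL]].
  by apply: in_ideal0; apply: emul0r.
apply: in_ideal_eq_coef (fsym (emul_catr _ _ _ _)).
apply: in_ideal_cat (IH vL); apply: in_ideal_eq_coef (fsym (emul_scaler _ _ _ _)).
apply: in_ideal_escale.
apply: (@in_ideal_eq_coef (emul (emul (emul (epath p) (epath w.1.1.2))
  (rel_elt t bnd K w.1.2)) (epath w.2))).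
  rewrite emul_epath; case: ifP => [/eqP end_p|_]; last exact: in_ideal0.
  by apply: in_ideal_gen => //; apply: valid_pcat.
by move=> r; rewrite !emulA; apply: eq_coef_emul => // r'; rewrite emulA.
Qed.

Lemma in_ideal_mulr_path p x : valid p -> in_ideal x -> in_ideal (emul x (epath p)).
Proof.
move=> vp [L [vL eq_xL]].
apply: (@in_ideal_eq_coef (emul (ideal_comb L) (epath p))); last first.
  by apply: eq_coef_emul => // r; rewrite eq_xL.
elim: L {eq_xL} vL => [_|w L IH /andP[/and3P[va rel_w vb] vL]]; first exact: in_ideal0.
rewrite /= emul_catl; apply: in_ideal_cat (IH vL).
apply: in_ideal_eq_coef (fsym (emul_scalel _ _ _ _)); apply: in_ideal_escale.
apply: in_ideal_eq_coef (fsym (emulA _ _ _ _)).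
rewrite emul_epath; case: ifP => [/eqP end_b|_]; last exact/in_ideal0/emul0r.
by apply: in_ideal_gen => //; apply: valid_pcat.
Qed.

Lemma escale_epath c p : [:: (c, p)] = escale c (epath p).
Proof. by rewrite /= mulr1. Qed.

Lemma in_ideal_mull x y : valid_elt x -> in_ideal y -> in_ideal (emul x y).
Proof.
move=> + Iy; elim: x => [_|[c p] x IH /= /andP[vp vx]]; first exact: in_ideal0.
rewrite -cat1s emul_catl escale_epath; apply: in_ideal_cat (IH vx).
apply: in_ideal_eq_coef (fsym (emul_scalel _ _ _ _)).
exact/in_ideal_escale/in_ideal_mull_path.
Qed.

Lemma in_ideal_mulr x y : valid_elt y -> in_ideal x -> in_ideal (emul x y).
Proof.
move=> + Ix; elim: y => [_|[c p] y IH /= /andP[vp vy]]; first exact/in_ideal0/emul0r.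
rewrite -cat1s; apply: in_ideal_eq_coef (fsym (emul_catr _ _ _ _)).
rewrite escale_epath; apply: in_ideal_cat (IH vy).
apply: in_ideal_eq_coef (fsym (emul_scaler _ _ _ _)).
exact/in_ideal_escale/in_ideal_mulr_path.
Qed.

End DimerIdeal.

Section Center.
Variables (Q0 Q1 Q2 : finType) (s t : Q1 -> Q0) (bnd : Q2 -> seq Q1) (pos : Q2 -> bool).
Variable K : fieldType.
Local Notation elt := (elt Q0 Q1 K).
Local Notation qpath := (qpath Q0 Q1).
Local Notation emul := (emul t).
Local Notation epath := (epath K).
Local Notation eone := (eone Q0 Q1 K).
Local Notation in_ideal := (in_dimer_ideal s t bnd pos).
Local Notation valid := (valid_path s t).
Local Notation valid_elt := (@valid_elt Q0 Q1 s t K).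
Implicit Types (x y z : elt) (p q r : qpath).

Definition central z := forall x, valid_elt x -> in_ideal (esub (emul z x) (emul x z)).

Lemma central_commute z : (forall x, coef (emul z x) =1 coef (emul x z)) -> central z.
Proof.
by move=> zC x _; apply: in_ideal0 => p; rewrite coef_esub zC subrr coef_nil.
Qed.

Lemma central_nil : central [::].
Proof. by apply: central_commute => x p; rewrite emul0r. Qed.

Lemma central_eone : central eone.
Proof. by apply: central_commute => x p; rewrite emul_eonel emul_eoner. Qed.

Lemma central_cat z z' : central z -> central z' -> central (z ++ z').
Proof.
move=> Cz Cz' x vx; apply: in_ideal_eq_coef (in_ideal_cat (Cz x vx) (Cz' x vx)) _ => p.
by rewrite coef_cat !coef_esub emul_catl emul_catr !coef_cat; ring.
Qed.

Lemma central_escale c z : central z -> central (escale c z).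
Proof.
move=> Cz x vx; apply: in_ideal_eq_coef (in_ideal_escale c (Cz x vx)) _ => p.
by rewrite coef_escale !coef_esub emul_scalel emul_scaler !coef_escale; ring.
Qed.

Lemma central_emul z z' : valid_elt z -> valid_elt z' -> central z -> central z' ->
  central (emul z z').
Proof.
move=> vz vz' Cz Cz' x vx.
have Izz'x := in_ideal_mull vz (Cz' x vx).
have Izxz' := in_ideal_mulr vz' (Cz x vx).
apply: in_ideal_eq_coef (in_ideal_cat Izz'x Izxz') _ => p.
rewrite coef_cat emul_subr emul_subl !coef_esub.
by rewrite -!emulA [coef (emul (emul x z) z') p]emulA; ring.
Qed.

Lemma central_paths z :
  (forall p, valid p -> in_ideal (esub (emul z (epath p)) (emul (epath p) z))) ->
  central z.
Proof.
move=> zC; elim=> [_|[c p] x IH /= /andP[vp vx]].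
  by apply: in_ideal0 => r; rewrite coef_esub emul0r coef_nil subrr.
apply: in_ideal_eq_coef (in_ideal_cat (in_ideal_escale c (zC p vp)) (IH vx)) _ => r.
rewrite -cat1s escale_epath coef_cat coef_escale !coef_esub emul_catr emul_catl.
rewrite (coef_cat (emul z _)) (coef_cat (emul (escale c _) z)).
by rewrite emul_scaler emul_scalel !coef_escale; ring.
Qed.

Lemma valid_central_epoly (P : {poly K}) z : valid_elt z -> central z ->
  valid_elt (epoly t P z) /\ central (epoly t P z).
Proof.
move=> vz Cz; rewrite /epoly; elim: (polyseq P) => [|c l [vl Cl]] /=.
  by split=> //; apply: central_nil.
split; first exact/valid_elt_cat/valid_elt_emul/vl/vz/valid_elt_escale/valid_elt_eone.
exact/central_cat/central_emul/Cl/Cz/vl/vz/central_escale/central_eone.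
Qed.

Definition path_equiv p q := in_ideal (esub (epath p) (epath q)).

Lemma path_equiv_refl p : path_equiv p p.
Proof. by apply: in_ideal0 => r; rewrite coef_esub subrr coef_nil. Qed.

Lemma path_equiv_sym p q : path_equiv p q -> path_equiv q p.
Proof.
move=> Ipq; apply: in_ideal_eq_coef (in_ideal_escale (-1) Ipq) _ => r.
by rewrite coef_escale !coef_esub; ring.
Qed.

Lemma path_equiv_trans p q r : path_equiv p q -> path_equiv q r -> path_equiv p r.
Proof.
move=> Ipq Iqr; apply: in_ideal_eq_coef (in_ideal_cat Ipq Iqr) _ => w.
by rewrite coef_cat !coef_esub; ring.
Qed.

Lemma path_equiv_catl h p q : valid h -> pend t h = p.1 -> pend t h = q.1 ->
  path_equiv p q -> path_equiv (pcat h p) (pcat h q).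
Proof.
move=> vh hp hq Ipq; apply: in_ideal_eq_coef (in_ideal_mull_path vh Ipq) _.
by move=> r; rewrite emul_subr !emul_epath -hp -hq eqxx.
Qed.

Lemma path_equiv_catr h p q : valid h -> pend t p = h.1 -> pend t q = h.1 ->
  path_equiv p q -> path_equiv (pcat p h) (pcat q h).
Proof.
move=> vh ph qh Ipq; apply: in_ideal_eq_coef (in_ideal_mulr_path vh Ipq) _.
by move=> r; rewrite emul_subl !emul_epath ph qh eqxx.
Qed.

End Center.

Lemma rot_index_cons (T : eqType) (x : T) (c : seq T) : x \in c ->
  rot (index x c) c = x :: behead (rot (index x c) c).
Proof. by move=> xc; rewrite (rot_index xc). Qed.

Lemma count_mem_gt0 (T : eqType) (x : T) (c : seq T) : x \in c -> (0 < count_mem x c)%N.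
Proof. by rewrite -has_pred1 has_count. Qed.

Section DimerQuiver.
Variables (Q0 Q1 Q2 : finType) (s t : Q1 -> Q0) (bnd : Q2 -> seq Q1) (pos : Q2 -> bool).
Variable K : fieldType.
Hypothesis HQ : is_dimer_quiver s t bnd pos.
Local Notation path_equiv := (@path_equiv Q0 Q1 Q2 s t bnd pos K).
Local Notation valid := (valid_path s t).

Lemma bnd_cycle F : cycle (fun a b => t a == s b) (bnd F).
Proof. by case: HQ => cycF _ _ _; case/andP: (cycF F). Qed.

Lemma source_neq_target a : s a != t a.
Proof. by case: HQ. Qed.

Lemma sum_count_bnd_le (e : Q1) (Gs : seq Q2) : uniq Gs ->
  (\sum_(G <- Gs) count_mem e (bnd G) <= face_occ bnd e)%N.
Proof.
by move=> uGs; rewrite big_uniq // /face_occ [X in (_ <= X)%N](bigID (mem Gs)) leq_addr.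
Qed.

Lemma bnd_uniq F : uniq (bnd F).
Proof.
apply: count_mem_uniq => e; case: (boolP (e \in bnd F)) => [eF|/count_memPn //].
apply/eqP; rewrite eqn_leq count_mem_gt0 // andbT.
case: HQ => _ _ /(_ e) [occ1|[occ2 [F1 [F2 /and4P[pos1 neg2 eF1 eF2]]]]] _.
  by have := sum_count_bnd_le e (isT : uniq [:: F]); rewrite big_seq1 occ1.
have [G [GF eG]] : exists G, G != F /\ e \in bnd G.
  case: (eqVneq F1 F) => [<-|]; last by exists F1.
  by exists F2; split=> //; apply: contraNneq neg2 => ->.
have uFG : uniq [:: F; G] by rewrite /= inE eq_sym GF.
have := sum_count_bnd_le e uFG; rewrite occ2 !big_cons big_nil.
have := count_mem_gt0 eG; lia.
Qed.

Lemma arrow_faces_rel e G1 G2 : G1 != G2 -> e \in bnd G1 -> e \in bnd G2 ->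
  is_rel bnd pos (e, G1, G2) || is_rel bnd pos (e, G2, G1).
Proof.
move=> G12 eG1 eG2.
case: HQ => _ _ /(_ e) [occ1|[occ2 [F1 [F2 /and4P[pos1 neg2 eF1 eF2]]]]] _.
  have uG12 : uniq [:: G1; G2] by rewrite /= inE G12.
  have := sum_count_bnd_le e uG12; rewrite occ1 !big_cons big_nil.
  by have := count_mem_gt0 eG1; have := count_mem_gt0 eG2; lia.
have F12 : F1 != F2 by apply: contraNneq neg2 => <-.
have faceF G : e \in bnd G -> (G == F1) || (G == F2).
  move=> eG; case: (eqVneq G F1) => // GF1; case: (eqVneq G F2) => // GF2.
  have uGF : uniq [:: G; F1; F2] by rewrite /= !inE negb_or GF1 GF2 F12.
  have := sum_count_bnd_le e uGF; rewrite occ2 !big_cons big_nil.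
  have := count_mem_gt0 eF1; have := count_mem_gt0 eF2.
  by have := count_mem_gt0 eG; lia.
rewrite /is_rel /= eG1 eG2.
case/orP: (faceF _ eG1) => /eqP ?; case/orP: (faceF _ eG2) => /eqP ?; subst.
- by rewrite eqxx in G12.
- by rewrite pos1 neg2.
- by rewrite pos1 neg2 orbT.
- by rewrite eqxx in G12.
Qed.

Lemma pend_cycle (i : Q0) b l : cycle (fun a b => t a == s b) (b :: l) ->
  pend t (i, b :: l) = s b.
Proof. by rewrite /= rcons_path /pend /= last_map => /andP[_ /eqP]. Qed.

Lemma pend_p_face e F : e \in bnd F -> pend t (p_face t bnd e F) = s e.
Proof.
move=> eF; have := bnd_cycle F; rewrite -(rot_cycle (index e (bnd F))).
by rewrite (rot_index_cons eF) => /(pend_cycle (t e)); rewrite /pend.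
Qed.

Lemma p_face_equiv e G1 G2 : e \in bnd G1 -> e \in bnd G2 ->
  path_equiv (p_face t bnd e G1) (p_face t bnd e G2).
Proof.
have rel_equiv F1 F2 : is_rel bnd pos (e, F1, F2) ->
    path_equiv (p_face t bnd e F1) (p_face t bnd e F2).
  move=> relF; case/and4P: (relF) => _ _ /= eF1 eF2.
  have := in_ideal_gen K (isT : valid (t e, [::])) relF (isT : valid (s e, [::])).
  move/in_ideal_eq_coef; apply=> r.
  rewrite (eq_coef_emul t (emul_subr t _ _ _) (frefl _)).
  rewrite emul_subl !emul_epath /= !eqxx !emul_epath !pend_p_face // !eqxx.
  by rewrite /pcat /= !cats0.
move=> eG1 eG2; case: (eqVneq G1 G2) => [<-|G12]; first exact: path_equiv_refl.
by case/orP: (arrow_faces_rel G12 eG1 eG2) => /rel_equiv // /path_equiv_sym.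
Qed.

(* The boundary of [F] read as a cycle at [i], where [e] is an arrow of [F]
   incident to [i]: it starts with [e] if [e] leaves [i], right after [e] if
   [e] enters [i]. *)
Definition face_cycle (i : Q0) (e : Q1) (F : Q2) : seq Q1 :=
  if s e == i then rot (index e (bnd F)) (bnd F) else rot (index e (bnd F)).+1 (bnd F).

Lemma face_cycle_out i e F : s e = i -> e \in bnd F ->
  (i, face_cycle i e F) = pcat (i, [:: e]) (p_face t bnd e F).
Proof. by move=> <- eF; rewrite /face_cycle eqxx {1}(rot_index_cons eF). Qed.

Lemma face_cycle_in i e F : t e = i -> e \in bnd F ->
  (i, face_cycle i e F) = pcat (p_face t bnd e F) (s e, [:: e]).
Proof.
move=> <- eF; rewrite /face_cycle (negbTE (source_neq_target e)).
rewrite rotS ?index_mem // (rot_index_cons eF) rot1_cons.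
by rewrite /pcat /p_face /= cats1.
Qed.

Lemma face_cycle_equiv i e G1 G2 : arrow_at s t i e -> e \in bnd G1 -> e \in bnd G2 ->
  path_equiv (i, face_cycle i e G1) (i, face_cycle i e G2).
Proof.
move=> /orP[/eqP se|/eqP te] eG1 eG2.
  rewrite !face_cycle_out //; apply: path_equiv_catl (p_face_equiv eG1 eG2) => //.
  by rewrite /valid_path /= se eqxx.
rewrite !face_cycle_in //; apply: path_equiv_catr (p_face_equiv eG1 eG2) => //.
- by rewrite /valid_path /= eqxx.
- exact: pend_p_face.
- exact: pend_p_face.
Qed.

Lemma incid_face_cycle i a b : incid s t bnd i a b ->
  exists F, [/\ a \in bnd F, b \in bnd F & face_cycle i a F = face_cycle i b F].
Proof.
case/and3P=> /eqP ta /eqP sb /existsP[F /hasP[k]].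
rewrite mem_iota add0n => /andP[_ lt_k] /andP[/eqP nth_a /eqP nth_b].
have lt_k1 : ((k + 1) %% size (bnd F) < size (bnd F))%N.
  by rewrite ltn_pmod // (leq_ltn_trans _ lt_k).
have aF : a \in bnd F by rewrite -nth_a mem_nth.
have bF : b \in bnd F by rewrite -nth_b mem_nth.
exists F; split=> //.
have ia : index a (bnd F) = k by rewrite -[in LHS]nth_a index_uniq ?bnd_uniq.
have ib : index b (bnd F) = ((k + 1) %% size (bnd F))%N.
  by rewrite -[in LHS]nth_b index_uniq ?bnd_uniq.
have sa : (s a == i) = false by rewrite -ta (negbTE (source_neq_target a)).
rewrite /face_cycle sa sb eqxx ia ib addn1.
case: (ltnP k.+1 (size (bnd F))) => [k1_lt|k1_ge]; first by rewrite modn_small.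
have -> : k.+1 = size (bnd F) by apply/eqP; rewrite eqn_leq k1_ge lt_k.
by rewrite modnn rot0 rot_size.
Qed.

Lemma face_cycle_atE i c : face_cycle_at s bnd i c ->
  exists b F, [/\ b \in bnd F, s b = i & c = face_cycle i b F].
Proof.
case=> F [k lt_k [-> head_i]]; move: head_i.
case def_c: (rot k (bnd F)) => [//|b l] /eqP sb.
have nth_b : nth b (bnd F) k = b by move: def_c; rewrite /rot (drop_nth b lt_k) => -[].
have bF : b \in bnd F by rewrite -nth_b mem_nth.
exists b, F; split=> //.
by rewrite /face_cycle sb eqxx -[in index b _]nth_b index_uniq ?bnd_uniq // def_c.
Qed.

Lemma face_cycle_at_closed i c : face_cycle_at s bnd i c ->
  valid (i, c) /\ pend t (i, c) = i.
Proof.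
case=> F [k _ [-> head_i]]; move: head_i (bnd_cycle F).
rewrite -(rot_cycle k); case: (rot k (bnd F)) => [//|b l] /eqP sb cyc_bl.
rewrite pend_cycle // sb; split=> //.
by move: cyc_bl; rewrite /valid_path /= sb eqxx rcons_path => /andP[].
Qed.

Lemma arrow_in_face a : exists F, a \in bnd F.
Proof.
apply/existsP; apply: contraT => /existsPn no_face.
have occ0 : face_occ bnd a = 0%N.
  by rewrite /face_occ big1 // => F _; apply/count_memPn/no_face.
by case: HQ => _ _ /(_ a) []; rewrite occ0 // => -[].
Qed.

Lemma incid_sym_arrow_at i a b : incid_sym s t bnd i a b ->
  arrow_at s t i a /\ arrow_at s t i b.
Proof.
by case/orP=> /and3P[/eqP ta /eqP sb _]; rewrite /arrow_at ?ta ?sb eqxx ?orbT.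
Qed.

Lemma incid_face_cycle_equiv i a b F G : incid_sym s t bnd i a b ->
  a \in bnd F -> b \in bnd G -> path_equiv (i, face_cycle i a F) (i, face_cycle i b G).
Proof.
have step a' b' F' G' : incid s t bnd i a' b' -> a' \in bnd F' -> b' \in bnd G' ->
    path_equiv (i, face_cycle i a' F') (i, face_cycle i b' G').
  move=> ab aF bG; have [H [aH bH eqH]] := incid_face_cycle ab.
  have [ia ib] : arrow_at s t i a' /\ arrow_at s t i b'.
    by apply: incid_sym_arrow_at; rewrite /incid_sym ab.
  apply: path_equiv_trans (face_cycle_equiv ia aF aH) _.
  by rewrite eqH; apply: face_cycle_equiv ib bH bG.
by case/orP=> [ab aF bG|ba aF bG]; [apply: step | apply/path_equiv_sym/step].
Qed.

Variable u : Q0 -> seq Q1.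
Hypothesis Hu : forall i, face_cycle_at s bnd i (u i).

Lemma face_cycle_equiv_u i e F : arrow_at s t i e -> e \in bnd F ->
  path_equiv (i, face_cycle i e F) (i, u i).
Proof.
move=> ie eF; have [b [G [bG sb ->]]] := face_cycle_atE (Hu i).
have ib : arrow_at s t i b by rewrite /arrow_at sb eqxx.
have [_ _ _ /(_ i) [_ connected]] := HQ.
case/connectP: (connected _ _ ie ib) => p + b_last; rewrite b_last in bG *.
elim: p e F ie eF {b_last} bG => [|c p IH] e F ie eF /=.
  by move=> eG _; apply: face_cycle_equiv.
move=> cG /andP[ec pc]; have [H cH] := arrow_in_face c.
have [_ ic] := incid_sym_arrow_at ec.
exact: path_equiv_trans (incid_face_cycle_equiv ec eF cH) (IH _ _ ic cH cG pc).
Qed.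

Lemma u_closed i : valid (i, u i) /\ pend t (i, u i) = i.
Proof. exact: face_cycle_at_closed. Qed.

Lemma u_arrow_comm a : path_equiv (s a, u (s a) ++ [:: a]) (s a, a :: u (t a)).
Proof.
have [F aF] := arrow_in_face a.
have va : valid (s a, [:: a]) by rewrite /valid_path /= eqxx.
have sa : arrow_at s t (s a) a by rewrite /arrow_at eqxx.
have ta : arrow_at s t (t a) a by rewrite /arrow_at eqxx orbT.
have out_a := face_cycle_out (erefl (s a)) aF.
have in_a := face_cycle_in (erefl (t a)) aF.
apply: (path_equiv_trans (q := pcat (s a, face_cycle (s a) a F) (s a, [:: a]))).
  apply: (path_equiv_catr (h := (s a, [:: a])) (p := (s a, u (s a)))) => //.
  - exact: (u_closed (s a)).2.
  - by rewrite out_a pend_pcat // pend_p_face.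
  - exact/path_equiv_sym/face_cycle_equiv_u.
rewrite out_a -pcatA -in_a.
apply: (path_equiv_catl (h := (s a, [:: a])) (q := (t a, u (t a)))) => //.
exact: face_cycle_equiv_u.
Qed.

Lemma u_path_comm l i : valid (i, l) ->
  path_equiv (i, u i ++ l) (i, l ++ u (pend t (i, l))).
Proof.
elim: l i => [|a l IH] i; first by rewrite cats0 => _; apply: path_equiv_refl.
rewrite /valid_path /= => /andP[/eqP <- pal].
have vl : valid (t a, l).
  case: l pal {IH} => [|b l] //= /andP[/eqP tab pbl].
  by rewrite /valid_path /= tab eqxx.
have va : valid (s a, [:: a]) by rewrite /valid_path /= eqxx.
apply: (path_equiv_trans (q := pcat (s a, a :: u (t a)) (t a, l))).
  have -> : (s a, u (s a) ++ a :: l) = pcat (s a, u (s a) ++ [:: a]) (t a, l).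
    by rewrite /pcat /= -catA.
  apply: path_equiv_catr (u_arrow_comm a) => //.
    by rewrite /pend map_cat last_cat.
  rewrite -[(s a, a :: _)]/(pcat (s a, [:: a]) (t a, u (t a))) pend_pcat //.
  exact: (u_closed (t a)).2.
change (path_equiv (pcat (s a, [:: a]) (t a, u (t a) ++ l))
                   (pcat (s a, [:: a]) (t a, l ++ u (pend t (t a, l))))).
exact: path_equiv_catl (IH _ vl).
Qed.

Definition u_sum : elt Q0 Q1 K := flatten [seq epath K (i, u i) | i <- enum Q0].

Lemma valid_elt_u_sum : valid_elt s t u_sum.
Proof.
apply/allP => kp /flatten_mapP[i _]; rewrite mem_seq1 => /eqP -> /=.
exact: (u_closed i).1.
Qed.

Lemma u_sum_mull q :
  coef (emul t u_sum (epath K q)) =1 coef (epath K (q.1, u q.1 ++ q.2)).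
Proof.
move=> p; rewrite coef_emul elt_sum_flatten_epath coef_elt_sum elt_sum_epath.
under eq_bigr do rewrite elt_sum_epath (u_closed _).2.
by rewrite -big_mkcond big_pred1_uniq ?enum_uniq ?mem_enum.
Qed.

Lemma u_sum_mulr q :
  coef (emul t (epath K q) u_sum) =1 coef (epath K (q.1, q.2 ++ u (pend t q))).
Proof.
move=> p; rewrite coef_emul !elt_sum_epath elt_sum_flatten_epath coef_elt_sum.
rewrite -big_mkcond (eq_bigl (pred1 (pend t q))) => [|i]; last exact: eq_sym.
by rewrite big_pred1_uniq ?enum_uniq ?mem_enum // elt_sum_epath.
Qed.

Lemma central_u_sum : central s t bnd pos u_sum.
Proof.
apply: central_paths => -[i l] vl; apply: in_ideal_eq_coef (u_path_comm vl) _ => p.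
by rewrite !coef_esub u_sum_mull u_sum_mulr.
Qed.

End DimerQuiver.

Unset Implicit Arguments.

Theorem lemma1p8 (Q0 Q1 Q2 : finType) (s t : Q1 -> Q0)
  (bnd : Q2 -> seq Q1) (pos : Q2 -> bool)
  (HQ : is_dimer_quiver s t bnd pos)
  (u : Q0 -> seq Q1) (Hu : forall i, face_cycle_at s bnd i (u i)) :
  let tt : elt Q0 Q1 Cplx := flatten [seq epath Cplx (i, u i) | i <- enum Q0] in
  forall (P : {poly Cplx}) (x : elt Q0 Q1 Cplx), valid_elt s t x ->
    in_dimer_ideal s t bnd pos
      (esub (emul t (epoly t P tt) x) (emul t x (epoly t P tt))).
Proof.
move=> tt P.
have [_ central_tt] :=
  valid_central_epoly P (valid_elt_u_sum Cplx HQ Hu) (central_u_sum HQ Hu).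
exact: central_tt.
Qed.
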